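(* Let $\bar Z=\frac{1}{\sqrt2}\big(\frac{\partial}{\partial\bar w}-iw\frac{\partial}{\partial s}\big)$ on $\mathbb{C}\times\mathbb{R}\ni(w,s)$. If $p(w,\bar w,s)$ is a homogeneous polynomial of degree $k\ge2$, then there exists a homogeneous polynomial $q(w,\bar w,s)$ of degree $k+1$ such that $\bar Zq=p$ and $|\mathrm{Re}\,q(w,\bar w,s)|\le C|w|^2(|w|+|s|)$ for $|w|+|s|^{1/2}\le1$. Furthermore, the coefficients of $q$ are linear combinations of the coefficients of $p$.
   Context: A polynomial in $w,\bar w,s$ is homogeneous of degree $k$ if it is a linear combination of monomials $\bar w^\alpha w^\beta s^\gamma$ with $\alpha+\beta+2\gamma=k$. *)

From HB Require Import structures.
From mathcomp Require Import all_boot all_order all_algebra.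
From mathcomp Require Import complex.
From mathcomp Require Import mpoly.
Set Implicit Arguments. Unset Strict Implicit. Unset Printing Implicit Defensive.
Import Order.TTheory GRing.Theory Num.Theory.
Local Open Scope ring_scope.

(* Polynomials in the three formal variables  wbar, w, s  with complex
   coefficients in C = R[i]; variable 0 = wbar, 1 = w, 2 = s. *)
Notation pol3 R := (mpoly 3 (complex R)).

Definition iwb : 'I_3 := @Ordinal 3 0 isT.
Definition iw  : 'I_3 := @Ordinal 3 1 isT.
Definition is_ : 'I_3 := @Ordinal 3 2 isT.

Definition whomog (R : rcfType) (k : nat) (p : pol3 R) : Prop :=
  forall m, m \in msupp p -> (m iwb + m iw + 2 * m is_)%N = k.

Definition Zbar (R : rcfType) (p : pol3 R) : pol3 R :=
  ((Num.sqrt (2 : R))^-1)%:C%C *: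
    (p^`M(iwb) - ((Complex 0 1) *: 'X_iw) * p^`M(is_)).

Definition ev (R : rcfType) (w : complex R) (s : R) : 'I_3 -> complex R :=
  fun i => if i == iwb then conjc w else if i == iw then w else s%:C%C.

Notation cmod := (@ComplexField.Normc.normc _).

From HB Require Import structures.
From mathcomp Require Import all_boot all_order all_algebra.
From mathcomp Require Import complex.
From mathcomp Require Import ssrcomplements mpoly.
From mathcomp Require Import zify ring.
Set Implicit Arguments. Unset Strict Implicit. Unset Printing Implicit Defensive.
Import Order.TTheory GRing.Theory Num.Theory.
Local Open Scope ring_scope.

(* Write sqrt 2 * Zbar = d/dwbar - D with D = i w d/ds, and let A be the
   antiderivative in wbar. A preserves and D lowers the degree in s, so DA is
   nilpotent on polynomials of weight k and the Neumann series
   q0 = sum_j A (DA)^j (sqrt 2 p) satisfies Zbar q0 = p.  Every monomial of q0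
   has degree at least 2 in (w, wbar), except c wbar s^(k/2) where c s^(k/2) is
   the part of sqrt 2 p free of w and wbar.  Subtracting conj(c) w (s + i w wbar)^(k/2),
   which Zbar annihilates, turns this exceptional part into
   c wbar s^(k/2) - conj(c) w s^(k/2), which is purely imaginary when wbar = conj w,
   and adds only monomials of degree at least 2 in (w, wbar).  For weight k + 1 >= 3
   such a monomial is bounded by |w|^2 (|w| + |s|) when |w| + |s|^(1/2) <= 1. *)

Section MsuppSubset.
Variables (n : nat) (R : nzRingType).
Implicit Types (p q : {mpoly R[n]}) (Q : pred 'X_{1..n}).

Lemma msuppD_sub Q p q :
  {subset msupp p <= Q} -> {subset msupp q <= Q} -> {subset msupp (p + q) <= Q}.
Proof. by move=> hp hq m /msuppD_le; rewrite mem_cat => /orP[/hp|/hq]. Qed.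

Lemma msuppB_sub Q p q :
  {subset msupp p <= Q} -> {subset msupp q <= Q} -> {subset msupp (p - q) <= Q}.
Proof. by move=> hp hq m /msuppB_le; rewrite mem_cat => /orP[/hp|/hq]. Qed.

Lemma msuppZ_sub Q c p : {subset msupp p <= Q} -> {subset msupp (c *: p) <= Q}.
Proof. by move=> hp m /msuppZ_le /hp. Qed.

Lemma msupp_sum_sub Q (I : Type) (r : seq I) (F : I -> {mpoly R[n]}) :
  (forall i, {subset msupp (F i) <= Q}) -> {subset msupp (\sum_(i <- r) F i) <= Q}.
Proof.
move=> hF; elim: r => [|i r ih]; first by rewrite big_nil msupp0.
by rewrite big_cons; apply: msuppD_sub.
Qed.

Lemma msupp_sub0 p : {subset msupp p <= pred0} -> p = 0.
Proof.
move=> hp; apply: msuppnil0; case E: (msupp p) => [//|m s].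
by have := hp m; rewrite E mem_head => /(_ isT).
Qed.

Lemma msupp_mderiv i p m : m \in msupp p^`M(i) -> (m + U_(i))%MM \in msupp p.
Proof.
by rewrite !mcoeff_msupp mcoeff_deriv; apply: contraNneq => ->; rewrite mul0rn.
Qed.

End MsuppSubset.

Section MPolyPrimitive.
Variables (n : nat) (F : numFieldType) (i : 'I_n).
Implicit Types (p q : {mpoly F[n]}).

Definition mprim p : {mpoly F[n]} :=
  \sum_(m <- msupp p) (p@_m / (m i).+1%:R) *: 'X_[m + U_(i)].

Lemma mprimwE k p : (msize p <= k)%N ->
  mprim p = \sum_(m : 'X_{1..n < k}) (p@_m / (m i).+1%:R) *: 'X_[m + U_(i)].
Proof.
move=> le_pk; rewrite /mprim (big_mksub 'X_{1..n < k}) ?msupp_uniq //=; last first.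
  by move=> m /msize_mdeg_lt /leq_trans; apply.
by rewrite big_rmcond //= => m /memN_msupp_eq0 ->; rewrite mul0r scale0r.
Qed.

Lemma mprim_is_linear : linear mprim.
Proof.
move=> c p q; set k := maxn (msize p) (msize q).
have le_pk : (msize p <= k)%N by rewrite leq_maxl.
have le_qk : (msize q <= k)%N by rewrite leq_maxr.
have le_pqk : (msize (c *: p + q) <= k)%N.
  by apply: leq_trans (msizeD_le _ _) _; rewrite geq_max (leq_trans (msizeZ_le _ _)).
rewrite !(mprimwE le_pk, mprimwE le_qk, mprimwE le_pqk) scaler_sumr -big_split /=.
by apply: eq_bigr => m _; rewrite mcoeffD mcoeffZ !scalerA -scalerDl mulrDl mulrA.
Qed.

HB.instance Definition _ :=
  GRing.isLinear.Build F {mpoly F[n]} {mpoly F[n]} _ mprim mprim_is_linear.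

Lemma mprimX m : mprim 'X_[m] = ((m i).+1%:R)^-1 *: 'X_[m + U_(i)].
Proof. by rewrite /mprim msuppX big_seq1 mcoeffX eqxx mul1r. Qed.

Lemma mderiv_mprim p : (mprim p)^`M(i) = p.
Proof.
rewrite /mprim raddf_sum [RHS]mpolyE; apply: eq_bigr => m _ /=.
rewrite mderivZ mderivX addmK scalerA mnmDE mnm1E eqxx addn1 divfK //.
by rewrite pnatr_eq0.
Qed.

Lemma msupp_mprim p m :
  m \in msupp (mprim p) -> exists2 m', m' \in msupp p & m = (m' + U_(i))%MM.
Proof.
move=> /msupp_sum_le /flattenP [_ /mapP [m' mp ->]].
rewrite mem_filter /= in mp; move=> /msuppZ_le; rewrite msuppX mem_seq1 => /eqP ->.
by exists m'.
Qed.

End MPolyPrimitive.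

Lemma sum_iter_telescope (V : zmodType) (f : V -> V) x N :
  \sum_(j < N) (iter j f x - iter j.+1 f x) = x - iter N f x.
Proof.
elim: N => [|N ih]; first by rewrite big_ord0 subrr.
by rewrite big_ord_recr /= ih addrA subrK.
Qed.

Lemma iter_linearP (K : pzRingType) (V : lmodType K) (f : {linear V -> V}) N a x y :
  iter N f (a *: x + y) = a *: iter N f x + iter N f y.
Proof. by elim: N => //= N ->; rewrite linearP. Qed.

Lemma expr_mono_le (K : numDomainType) (x y : K) (d g : nat) :
  0 <= x <= 1 -> 0 <= y <= 1 -> (1 < d)%N -> (2 < d)%N || (0 < g)%N ->
  x ^+ d * y ^+ g <= x ^+ 2 * (x + y).
Proof.
move=> /andP[x0 x1] /andP[y0 y1] d1; case: (ltnP 2 d) => [d3 _|d2 /= g0].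
  apply: le_trans (_ : x ^+ 3 <= _); last first.
    by rewrite exprS mulrC ler_wpM2l ?exprn_ge0 ?lerDl.
  apply: le_trans (_ : x ^+ d <= _); last exact: ler_wiXn2l.
  by rewrite -[leRHS]mulr1 ler_wpM2l ?exprn_ge0 ?exprn_ile1.
have -> : d = 2 by lia.
by rewrite ler_wpM2l ?exprn_ge0 // (le_trans (ler_iXnr g0 y0 y1)) ?lerDr.
Qed.

Section ComplexModulus.
Variable R : rcfType.
Implicit Types x y z : complex R.

Lemma cmod_ge0 z : 0 <= cmod z.
Proof. by case: z => a b; exact: sqrtr_ge0. Qed.

Lemma cmodX z n : cmod (z ^+ n) = cmod z ^+ n.
Proof.
elim: n => [|n ih]; first by rewrite !expr0 ComplexField.Normc.normc1.
by rewrite !exprS ComplexField.Normc.normcM ih.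
Qed.

Lemma cmod_conj z : cmod (conjc z) = cmod z.
Proof. by case: z => a b; rewrite /= sqrrN. Qed.

Lemma cmod_real (s : R) : cmod s%:C%C = `|s|.
Proof. by rewrite /= expr0n /= addr0 sqrtr_sqr. Qed.

Lemma cmod_sum_le (I : Type) (r : seq I) (F : I -> complex R) :
  cmod (\sum_(i <- r) F i) <= \sum_(i <- r) cmod (F i).
Proof.
elim: r => [|i r ih]; first by rewrite !big_nil ComplexField.Normc.normc0.
by rewrite !big_cons; apply: le_trans (le_normcD _ _) (lerD _ ih).
Qed.

Lemma ReD x y : complex.Re (x + y) = complex.Re x + complex.Re y.
Proof. by case: x; case: y. Qed.

Lemma Re_le_cmod z : `|complex.Re z| <= cmod z.
Proof.
by case: z => a b /=; rewrite -sqrtr_sqr; apply: ler_wsqrtr; rewrite lerDl sqr_ge0.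
Qed.

Lemma cmod_meval_le n (v : 'I_n -> complex R) (G : {mpoly (complex R)[n]}) (b : R) :
  (forall m, m \in msupp G -> cmod ('X_[m] : {mpoly _[n]}).@[v] <= b) ->
  cmod G.@[v] <= (\sum_(m <- msupp G) cmod G@_m) * b.
Proof.
move=> hb; rewrite mevalE; under eq_bigr do rewrite -mevalX.
apply: le_trans (cmod_sum_le _ _) _; rewrite mulr_suml big_seq [leRHS]big_seq.
apply: ler_sum => m /hb; rewrite ComplexField.Normc.normcM; exact/ler_wpM2l/cmod_ge0.
Qed.

End ComplexModulus.

Section ZbarSolution.
Variable R : rcfType.
Local Notation C := (complex R).
Local Notation P := (pol3 R).
Local Notation sqrt2 := ((Num.sqrt (2 : R))%:C%C).
Implicit Types (p q y : P) (m : 'X_{1..3}).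

Definition wdeg m := (m iwb + m iw + 2 * m is_)%N.

Lemma whomogP k p : whomog k p <-> {subset msupp p <= [pred m | wdeg m == k]}.
Proof. by split=> hp m /hp; rewrite inE => /eqP. Qed.

Lemma whomogD k p q : whomog k p -> whomog k q -> whomog k (p + q).
Proof. by move=> /whomogP hp /whomogP hq; apply/whomogP/msuppD_sub. Qed.

Lemma whomogB k p q : whomog k p -> whomog k q -> whomog k (p - q).
Proof. by move=> /whomogP hp /whomogP hq; apply/whomogP/msuppB_sub. Qed.

Lemma whomogZ k c p : whomog k p -> whomog k (c *: p).
Proof. by move=> /whomogP hp; apply/whomogP/msuppZ_sub. Qed.

Lemma whomog_sum k (I : Type) (r : seq I) (F : I -> P) :
  (forall i, whomog k (F i)) -> whomog k (\sum_(i <- r) F i).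
Proof. by move=> hF; apply/whomogP/msupp_sum_sub => i; apply/whomogP. Qed.

Lemma whomogM a b p q : whomog a p -> whomog b q -> whomog (a + b) (p * q).
Proof.
move=> hp hq m /msuppM_le /allpairsP [[m1 m2] /= [/hp h1 /hq h2 ->]].
by rewrite !mnmDE -h1 -h2; lia.
Qed.

Lemma whomogZX k c m : (c != 0 -> wdeg m = k) -> whomog k (c *: 'X_[m] : P).
Proof.
have [-> _|c0 /(_ isT) hm] := eqVneq c 0; first by rewrite scale0r => m'; rewrite msupp0.
by move=> m'; rewrite msuppMCX // mem_seq1 => /eqP ->.
Qed.

Lemma whomogX k m : wdeg m = k -> whomog k ('X_[m] : P).
Proof. by move=> hm; rewrite -[X in whomog _ X]scale1r; apply: whomogZX. Qed.

Definition Dop p : P := ('i%C *: 'X_iw) * p^`M(is_).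

Lemma Dop_is_linear : linear Dop.
Proof. by move=> c p q; rewrite /Dop linearP mulrDr scalerAr. Qed.

HB.instance Definition _ := GRing.isLinear.Build C P P _ Dop Dop_is_linear.

Lemma msupp_Dop p m :
  m \in msupp (Dop p) -> exists2 m', (m' + U_(is_))%MM \in msupp p & m = (U_(iw) + m')%MM.
Proof.
move=> /msuppM_le /allpairsP [[m1 m2] /= [+ /msupp_mderiv hm2 ->]].
by move=> /msuppZ_le; rewrite msuppX mem_seq1 => /eqP ->; exists m2.
Qed.

Lemma Zbar_E q : Zbar q = ((Num.sqrt (2 : R))^-1)%:C%C *: (q^`M(iwb) - Dop q).
Proof. by []. Qed.

Lemma Zbar_is_linear : linear (@Zbar R).
Proof. by move=> c p q; rewrite !Zbar_E !linearP /= -!mul_mpolyC; ring. Qed.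

HB.instance Definition _ := GRing.isLinear.Build C P P _ (@Zbar R) Zbar_is_linear.

Lemma ZbarB p q : Zbar (p - q) = Zbar p - Zbar q.
Proof. exact: raddfB. Qed.

Lemma ZbarZ c q : Zbar (c *: q) = c *: Zbar q.
Proof. exact: linearZ. Qed.

Lemma ZbarM p q : Zbar (p * q) = Zbar p * q + p * Zbar q.
Proof. by rewrite !Zbar_E /Dop !mderivM -!mul_mpolyC; ring. Qed.

Definition Dprim : P -> P := Dop \o mprim iwb.

Lemma Dprim_sdeg_lt j p : {subset msupp p <= [pred m : 'X_{1..3} | (m is_ < j.+1)%N]} ->
  {subset msupp (Dprim p) <= [pred m : 'X_{1..3} | (m is_ < j)%N]}.
Proof.
move=> hp m /msupp_Dop [m' /msupp_mprim [m'' /hp hm'' e] ->].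
by move: hm''; have := congr1 (fun m => m is_) e; rewrite !inE !mnmDE !mnm1E /=; lia.
Qed.

Lemma iter_Dprim_eq0 j p :
  {subset msupp p <= [pred m : 'X_{1..3} | (m is_ < j)%N]} -> iter j Dprim p = 0.
Proof.
elim: j p => [|j ih] p hp; first by apply: msupp_sub0 => m /hp; rewrite inE ltn0.
by rewrite iterSr; apply/ih/Dprim_sdeg_lt.
Qed.

Lemma whomog_sdeg_lt k y :
  whomog k y -> {subset msupp y <= [pred m : 'X_{1..3} | (m is_ < k.+1)%N]}.
Proof. by move=> hy m /hy; rewrite inE; lia. Qed.

Lemma whomog_mprim k p : whomog k p -> whomog k.+1 (mprim iwb p).
Proof. by move=> hp m /msupp_mprim [m' /hp hm' ->]; rewrite !mnmDE !mnm1E /=; lia. Qed.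

Lemma whomog_Dprim k p : whomog k p -> whomog k (Dprim p).
Proof.
move=> hp m /msupp_Dop [m' /msupp_mprim [m'' /hp hm'' /mnmP e] ->].
by move: hm'' (e iwb) (e iw) (e is_); rewrite !mnmDE !mnm1E /=; lia.
Qed.

Definition neumann k y : P := \sum_(j < k.+1) mprim iwb (iter j Dprim y).

Lemma neumann_is_linear k : linear (neumann k).
Proof.
move=> a p q; rewrite /neumann scaler_sumr -big_split; apply: eq_bigr => j _ /=.
by rewrite iter_linearP linearP.
Qed.

HB.instance Definition _ k :=
  GRing.isLinear.Build C P P _ (neumann k) (neumann_is_linear k).

Lemma neumannP k y : whomog k y -> (neumann k y)^`M(iwb) - Dop (neumann k y) = y.
Proof.
move=> hy; rewrite -[RHS]subr0 -(iter_Dprim_eq0 (whomog_sdeg_lt hy)) -sum_iter_telescope.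
rewrite /neumann !linear_sum -big_split; apply: eq_bigr => j _.
by rewrite /= mderiv_mprim.
Qed.

Lemma whomog_neumann k y : whomog k y -> whomog k.+1 (neumann k y).
Proof.
move=> hy; apply: whomog_sum => j; apply: whomog_mprim.
by elim: (val j) => //= i ih; apply: whomog_Dprim.
Qed.

Definition zeta : P := 'X_is_ + 'i%C *: ('X_iw * 'X_iwb).

Definition wzeta g : P := 'X_iw * zeta ^+ g.

Lemma mderivXU (i j : 'I_3) : ('X_i : P)^`M(j) = (i == j)%:R.
Proof.
rewrite mderivX mnm1E; case: eqP => [->|_]; last by rewrite scale0r.
by rewrite -{1}[U_(j)%MM]add0m addmK mpolyX0 scale1r.
Qed.

Lemma Zbar_wzeta g : Zbar (wzeta g) = 0.
Proof.
have Zbar_Xw : Zbar ('X_iw : P) = 0 by rewrite Zbar_E /Dop !mderivXU /= mulr0 subr0 scaler0.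
have Zbar_zeta : Zbar zeta = 0.
  rewrite Zbar_E /Dop /zeta !mderivD !mderivZ !mderivM !mderivXU /=.
  by rewrite !(mulr0, mul0r, addr0, add0r, mulr1, scaler0) subrr scaler0.
suff Zbar_zetaX : Zbar (zeta ^+ g) = 0.
  by rewrite /wzeta ZbarM Zbar_Xw Zbar_zetaX mul0r mulr0 addr0.
elim: g => [|g ih]; first by rewrite expr0 Zbar_E /Dop !mderivC mulr0 subr0 scaler0.
by rewrite exprS ZbarM Zbar_zeta ih mul0r mulr0 addr0.
Qed.

Lemma whomog_wzeta g : whomog (2 * g).+1 (wzeta g).
Proof.
have hw : whomog 1 ('X_iw : P) by apply: whomogX; rewrite /wdeg !mnm1E.
have hwb : whomog 1 ('X_iwb : P) by apply: whomogX; rewrite /wdeg !mnm1E.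
have hs : whomog 2 ('X_is_ : P) by apply: whomogX; rewrite /wdeg !mnm1E.
have whomog_zeta : whomog 2 zeta := whomogD hs (whomogZ (whomogM hw hwb)).
rewrite -add1n; apply: whomogM hw _.
elim: g => [|g ih]; first by rewrite expr0 -mpolyX0; apply: whomogX; rewrite /wdeg !mnm0E.
by rewrite exprS mulnS; apply: whomogM.
Qed.

Definition spow g : 'X_{1..3} := (U_(is_) *+ g)%MM.

(* For odd k the coefficient of s^(k/2) vanishes by homogeneity, so the
   correction term is 0. *)
Definition Zbar_sol k p : P :=
  let y := sqrt2 *: p in neumann k y - conjc y@_(spow k./2) *: wzeta k./2.

Lemma Zbar_solP k p : whomog k p -> Zbar (Zbar_sol k p) = p.
Proof.
move=> hp; rewrite ZbarB ZbarZ Zbar_wzeta scaler0 subr0 Zbar_E neumannP; last exact: whomogZ.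
by rewrite scalerA -rmorphM mulVf ?scale1r // gt_eqF // sqrtr_gt0 ltr0n.
Qed.

Lemma whomog_Zbar_sol k p : whomog k p -> whomog k.+1 (Zbar_sol k p).
Proof.
move=> hp; have hy := whomogZ (c := sqrt2) hp.
apply: whomogD (whomog_neumann hy) _; rewrite -scaleNr.
have [/hy hk|/memN_msupp_eq0 ->] := boolP (spow k./2 \in msupp (sqrt2 *: p)).
  have -> : k.+1 = (2 * k./2).+1 by move: hk; rewrite !mulmnE !mnm1E /=; lia.
  exact/whomogZ/whomog_wzeta.
by rewrite raddf0 oppr0 scale0r => m; rewrite msupp0.
Qed.

Lemma Zbar_solD k p q : Zbar_sol k (p + q) = Zbar_sol k p + Zbar_sol k q.
Proof.
by rewrite /Zbar_sol scalerDr raddfD mcoeffD rmorphD scalerDl opprD addrACA.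
Qed.

Lemma Zbar_solZ k (r : R) p : Zbar_sol k (r%:C%C *: p) = r%:C%C *: Zbar_sol k p.
Proof.
have conjc_realM (z : C) : conjc (r%:C%C * z) = r%:C%C * conjc z by case: z => a b; simpc.
rewrite /Zbar_sol scalerA mulrC -scalerA linearZ mcoeffZ conjc_realM.
by rewrite scalerBr scalerA.
Qed.

Definition in_w2_ideal q := {subset msupp q <= [pred m : 'X_{1..3} | (1 < m iwb + m iw)%N]}.

Lemma in_w2_idealMl p q : in_w2_ideal q -> in_w2_ideal (p * q).
Proof.
move=> hq m /msuppM_le /allpairsP [[m1 m2] /= [_ /hq + ->]].
by rewrite !inE !mnmDE; lia.
Qed.

Lemma mprim_in_w2_ideal x :
  {subset msupp x <= [pred m : 'X_{1..3} | (0 < m iwb + m iw)%N]} ->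
  in_w2_ideal (mprim iwb x).
Proof.
by move=> hx m /msupp_mprim [m' /hx + ->]; rewrite !inE !mnmDE !mnm1E /=; lia.
Qed.

Lemma mprim_Dop_in_w2_ideal x : in_w2_ideal (mprim iwb (Dop x)).
Proof.
apply: mprim_in_w2_ideal => m /msupp_Dop [m' _ ->].
by rewrite inE !mnmDE !mnm1E /=; lia.
Qed.

Lemma whomog_sub_spow k y : whomog k y ->
  {subset msupp (y - y@_(spow k./2) *: 'X_[spow k./2])
     <= [pred m : 'X_{1..3} | (0 < m iwb + m iw)%N]}.
Proof.
move=> hy m; rewrite mcoeff_msupp mcoeffB mcoeffZ mcoeffX inE.
have [<-|ne] := eqVneq (spow k./2) m; first by rewrite mulr1 subrr eqxx.
rewrite mulr0 subr0 -mcoeff_msupp => /hy hk; rewrite lt0n; apply: contra ne => m0.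
move: m0; rewrite addn_eq0 => /andP [/eqP m0 /eqP m1].
move: hk; rewrite m0 m1 add0n mul2n => <-; rewrite doubleK.
apply/eqP/mnmP => i; rewrite mulmnE mnm1E.
have [->|[->|->]] : i = iwb \/ i = iw \/ i = is_.
  by case: i => [[|[|[|//]]] ?]; [left|right; left|right; right]; apply: val_inj.
all: by rewrite /= ?m0 ?m1 ?mul1n.
Qed.

Lemma neumann_in_w2_ideal k y : whomog k y ->
  in_w2_ideal (neumann k y - y@_(spow k./2) *: 'X_[spow k./2 + U_(iwb)]).
Proof.
move=> hy; rewrite /neumann big_ord_recl /= addrAC.
have <- : mprim iwb (y - y@_(spow k./2) *: 'X_[spow k./2]) =
          mprim iwb y - y@_(spow k./2) *: 'X_[spow k./2 + U_(iwb)].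
  by rewrite linearB linearZ /= mprimX mulmnE mnm1E /= mul0n invr1 scale1r.
apply: msuppD_sub; first exact/mprim_in_w2_ideal/whomog_sub_spow.
by apply: msupp_sum_sub => j; apply: mprim_Dop_in_w2_ideal.
Qed.

Lemma wzeta_in_w2_ideal g : in_w2_ideal (wzeta g - 'X_[U_(iw) + spow g]).
Proof.
rewrite /wzeta mpolyXD -mpolyXn -mulrBr; apply: in_w2_idealMl.
elim: g => [|g ih]; first by rewrite !expr0 subrr => m; rewrite msupp0.
have -> : zeta ^+ g.+1 - 'X_is_ ^+ g.+1 =
          zeta * (zeta ^+ g - 'X_is_ ^+ g) + 'X_is_ ^+ g * ('i%C *: ('X_iw * 'X_iwb)).
  by rewrite !exprS /zeta; ring.
apply: msuppD_sub; first exact: in_w2_idealMl.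
apply/in_w2_idealMl/msuppZ_sub; rewrite -mpolyXD => m.
by rewrite msuppX mem_seq1 => /eqP ->; rewrite inE !mnmDE !mnm1E.
Qed.

Definition wlin_part k p : P :=
  let c := (sqrt2 *: p)@_(spow k./2) in
  c *: 'X_[spow k./2 + U_(iwb)] - conjc c *: 'X_[U_(iw) + spow k./2].

Lemma Zbar_sol_in_w2_ideal k p : whomog k p -> in_w2_ideal (Zbar_sol k p - wlin_part k p).
Proof.
move=> hp; rewrite /Zbar_sol /wlin_part; set y := sqrt2 *: p; set c := y@_(spow k./2).
have -> : neumann k y - conjc c *: wzeta k./2 -
          (c *: 'X_[spow k./2 + U_(iwb)] - conjc c *: 'X_[U_(iw) + spow k./2]) =
          (neumann k y - c *: 'X_[spow k./2 + U_(iwb)])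
          - conjc c *: (wzeta k./2 - 'X_[U_(iw) + spow k./2]).
  by rewrite -!mul_mpolyC; ring.
apply: msuppB_sub; first exact/neumann_in_w2_ideal/whomogZ.
exact/msuppZ_sub/wzeta_in_w2_ideal.
Qed.

Lemma whomog_wlin_part k p : whomog k p -> whomog k.+1 (wlin_part k p).
Proof.
move=> hp; rewrite /wlin_part; set c := _@_(spow k./2).
have hc : c != 0 -> wdeg (spow k./2) = k.
  by move=> c0; apply: (whomogZ (c := sqrt2) hp); rewrite mcoeff_msupp.
apply: whomogB; apply: whomogZX; rewrite ?conjc_eq0 => /hc;
  by rewrite /wdeg !mnmDE !mulmnE !mnm1E /=; lia.
Qed.

Lemma ev_X m w s :
  ('X_[m] : P).@[ev w s] = conjc w ^+ m iwb * w ^+ m iw * s%:C%C ^+ m is_.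
Proof.
rewrite mevalX !big_ord_recl big_ord0 mulr1 mulrA.
have -> : lift ord0 (lift ord0 ord0) = is_ by apply: val_inj.
have -> : lift ord0 ord0 = iw by apply: val_inj.
by have -> : ord0 = iwb by apply: val_inj.
Qed.

Lemma Re_wlin_part k p w s : complex.Re ((wlin_part k p).@[ev w s]) = 0.
Proof.
rewrite /wlin_part mevalB !mevalZ; set c := _@_ _.
suff -> : conjc c * ('X_[U_(iw) + spow k./2] : P).@[ev w s] =
          conjc (c * ('X_[spow k./2 + U_(iwb)] : P).@[ev w s]).
  by case: (c * _) => a b; rewrite /= subrr.
rewrite !ev_X !rmorphM /= !rmorphXn /= conjcK oppr0 !mnmDE !mulmnE !mnm1E /=.
by rewrite !(mul0n, mul1n, addn0, add0n, expr0, expr1, mulr1, mul1r).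
Qed.

Lemma cmod_ev_X m w s :
  cmod (('X_[m] : P).@[ev w s]) = cmod w ^+ (m iwb + m iw) * `|s| ^+ m is_.
Proof.
by rewrite ev_X !ComplexField.Normc.normcM !cmodX cmod_conj cmod_real exprD.
Qed.

Lemma w2_ideal_bound k G : (2 <= k)%N -> whomog k.+1 G -> in_w2_ideal G ->
  exists K : R, forall w s, cmod w + Num.sqrt `|s| <= 1 ->
    cmod G.@[ev w s] <= K * cmod w ^+ 2 * (cmod w + `|s|).
Proof.
move=> hk hG hI; exists (\sum_(m <- msupp G) cmod G@_m) => w s hws.
have w1 : cmod w <= 1 by apply: le_trans hws; rewrite lerDl sqrtr_ge0.
have s1 : `|s| <= 1.
  by rewrite -ler_sqrt ?ler01 // sqrtr1 (le_trans _ hws) // lerDr cmod_ge0.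
rewrite -mulrA; apply: cmod_meval_le => m hm; rewrite cmod_ev_X.
apply: expr_mono_le; rewrite ?cmod_ge0 ?normr_ge0 //.
  by have := hI m hm; rewrite inE.
by move: (hG m hm) (hI m hm) hk; rewrite inE; lia.
Qed.

End ZbarSolution.

Theorem lemma8p3 (R : rcfType) (k : nat) : (2 <= k)%N ->
  exists L : pol3 R -> pol3 R,
    (forall p q : pol3 R, L (p + q) = L p + L q) /\
    (forall (r : R) (p : pol3 R), L (r%:C%C *: p) = r%:C%C *: L p) /\
    (forall p : pol3 R, whomog k p ->
       [/\ whomog k.+1 (L p),
           Zbar (L p) = p &
           exists C : R, forall (w : complex R) (s : R),
             cmod w + Num.sqrt `|s| <= 1 ->
             `|@complex.Re R ((L p).@[ev w s])| <= C * cmod w ^+ 2 * (cmod w + `|s|)]).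
Proof.
move=> hk; exists (Zbar_sol k); split; [exact: Zbar_solD | split; [exact: Zbar_solZ |]].
move=> p hp; split; [exact: whomog_Zbar_sol | exact: Zbar_solP |].
have [K hK] := w2_ideal_bound hk (whomogB (whomog_Zbar_sol hp) (whomog_wlin_part hp))
  (Zbar_sol_in_w2_ideal hp).
exists K => w s hws.
rewrite -[Zbar_sol k p](subrK (wlin_part k p)) mevalD ReD Re_wlin_part addr0.
exact: le_trans (Re_le_cmod _) (hK w s hws).
Qed.
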